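(* Let $(n,t)\in\{(9,11),(10,13),(11,16)\}$. Then every $n$-vertex graph containing at least $t$ triangles contains a copy of $\widehat P_4$ as a (not necessarily induced) subgraph. Equivalently, $\mathrm{ex}(9,K_3,\widehat P_4)\le 10$, $\mathrm{ex}(10,K_3,\widehat P_4)\le 12$ and $\mathrm{ex}(11,K_3,\widehat P_4)\le 15$.
   Context: All graphs are finite and simple. $P_4$ denotes the path on $4$ vertices. For a graph $G$, its suspension $\widehat G$ is the graph obtained from $G$ by adding one new vertex and joining it to every vertex of $G$. $\mathrm{ex}(n,K_3,H)$ denotes the maximum number of triangles in an $n$-vertex graph containing no subgraph isomorphic to $H$. *)

From mathcomp Require Import all_boot.
Set Implicit Arguments. Unset Strict Implicit. Unset Printing Implicit Defensive.

Definition simple_graph (T : finType) (e : rel T) : Prop :=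
  irreflexive e /\ symmetric e.

Definition triangles (T : finType) (e : rel T) : {set {set T}} :=
  [set S : {set T} | (#|S| == 3) &&
     [forall x in S, forall y in S, (x != y) ==> e x y]].

Definition num_triangles (T : finType) (e : rel T) : nat := #|triangles e|.

(* The graph P_4-hat (suspension of P_4) on 'I_5:
   vertex 0 is the apex, joined to 1,2,3,4; path 1-2-3-4. *)
Definition P4hat_edge (i j : 'I_5) : bool :=
  let a := nat_of_ord i in let b := nat_of_ord j in
  (a != b) && [|| (a == 0), (b == 0), (a == b.+1) | (b == a.+1)].

Definition contains_subgraph (U T : finType) (h : rel U) (e : rel T) : Prop :=
  exists f : U -> T, injective f /\ forall u v, h u v -> e (f u) (f v).

From mathcomp Require Import all_boot zify.
Set Implicit Arguments. Unset Strict Implicit. Unset Printing Implicit Defensive.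

(* In a P4-hat-free graph a vertex outside a K4 has at most one neighbour in
   it, and a triangle two of whose edges lie in further triangles extends to a
   K4.  Hence every triangle outside the K4s has two private edges (edges lying
   in no other triangle); dropping one edge from each triangle of three private
   edges leaves a triangle-free graph H in which each such triangle keeps two
   edges.  As every H-edge lies in a single triangle, Mantel's theorem gives
   8t <= n^2 when there is no K4, and 8t <= 32 + 4(n-4) + (n-4)^2 when there is
   exactly one (H has no edge inside the K4 and one edge leaving it per outside
   vertex).  With two K4s the remaining triangles all use the at most three
   vertices outside their union, each of degree at most 4 and hence, its link
   being P4-free, in at most 3 triangles.  For n = 11 with a K4, some vertex of
   the K4 lies in at most 3 triangles, and deleting it reduces to n = 10. *)

Lemma sum_nat_pred_card (I : finType) (P Q : pred I) :
  \sum_(i | P i) (Q i : nat) = #|[set i | P i && Q i]|.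
Proof.
rewrite -sum1dep_card big_mkcondr /=; apply: eq_bigr => i _.
by case: (Q i).
Qed.

Lemma sum_card_incidence_le (I J : finType) (F : {set I}) (D : {set J})
    (R : I -> J -> bool) :
  (forall j, j \in D -> #|[set i in F | R i j]| <= 1) ->
  \sum_(i in F) #|[set j in D | R i j]| <= #|D|.
Proof.
move=> fibre_le1.
rewrite (eq_bigr (fun i => \sum_(j in D) (R i j : nat))); last first.
  by move=> i _; rewrite sum_nat_pred_card.
rewrite exchange_big /= -sum1_card; apply: leq_sum => j Dj.
by rewrite sum_nat_pred_card; apply: fibre_le1.
Qed.

Lemma sqr_sum_le (I : finType) (A : {set I}) (a : I -> nat) :
  (\sum_(i in A) a i) ^ 2 <= #|A| * \sum_(i in A) a i ^ 2.
Proof.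
set S := \sum_(i in A) a i; set Q := \sum_(i in A) a i ^ 2.
have sqrS : S ^ 2 = \sum_(i in A) \sum_(j in A) a i * a j.
  by rewrite expnS expn1 big_distrl /=; apply: eq_bigr => i _; rewrite big_distrr.
have sum_sqr : \sum_(i in A) \sum_(j in A) (a i ^ 2 + a j ^ 2) = 2 * (#|A| * Q).
  rewrite (eq_bigr (fun i => #|A| * a i ^ 2 + Q)); last first.
    by move=> i _; rewrite big_split /= sum_nat_const.
  by rewrite big_split /= sum_nat_const -big_distrr /= mul2n addnn.
rewrite -(leq_pmul2l (_ : 0 < 2)) // -sum_sqr sqrS big_distrr /=.
apply: leq_sum => i _; rewrite big_distrr /=; apply: leq_sum => j _.
exact: nat_Cauchy.
Qed.

Lemma sum_card_setI (T : finType) (F : {set {set T}}) (Y : {set T}) :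
  \sum_(S in F) #|S :&: Y| = \sum_(y in Y) #|[set S in F | y \in S]|.
Proof.
have E S : #|S :&: Y| = \sum_(y in Y) (y \in S : nat).
  by rewrite sum_nat_pred_card; apply: eq_card => y; rewrite !inE andbC.
rewrite (eq_bigr _ (fun S _ => E S)) exchange_big /=.
by apply: eq_bigr => y _; rewrite sum_nat_pred_card.
Qed.

Lemma cards3_at (T : finType) (S : {set T}) (y : T) : #|S| = 3 -> y \in S ->
  exists u v, [/\ u \in S, v \in S, u != v, u != y & v != y] /\ S = [set y; u; v].
Proof.
move=> S3 yS; have : #|S :\ y| = 2 by move: S3; rewrite (cardsD1 y) yS add1n => -[].
case/eqP/cards2P=> u [v [uv Suv]].
have : u \in S :\ y by rewrite Suv !inE eqxx.
have : v \in S :\ y by rewrite Suv !inE eqxx orbT.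
rewrite !inE => /andP[vy vS] /andP[uy uS].
by exists u, v; split; last by rewrite -{1}(setD1K yS) Suv setUA.
Qed.

Lemma cards4_others (T : finType) (Q : {set T}) (a b : T) :
    #|Q| = 4 -> a \in Q -> b \in Q -> a != b ->
  exists c d, [/\ c \in Q, d \in Q & c != d] /\ [/\ c != a, c != b, d != a & d != b].
Proof.
move=> Q4 aQ bQ ab; have : #|Q :\ a :\ b| = 2.
  by move: Q4; rewrite (cardsD1 a) aQ (cardsD1 b (Q :\ a)) !inE eq_sym ab bQ !add1n => -[].
case/eqP/cards2P=> c [d [cd Qcd]].
have : c \in Q :\ a :\ b by rewrite Qcd !inE eqxx.
have : d \in Q :\ a :\ b by rewrite Qcd !inE eqxx orbT.
by rewrite !inE => /and3P[db da dQ] /and3P[cb ca cQ]; exists c, d.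
Qed.

Definition pairs_in (T : finType) (R : rel T) (Y : {set T}) : {set T * T} :=
  [set p | [&& p.1 \in Y, p.2 \in Y & R p.1 p.2]].

Lemma mantel_pairs (T : finType) (R : rel T) (Y : {set T}) : symmetric R ->
    (forall a b c, R a b -> R b c -> R a c -> False) ->
  2 * #|pairs_in R Y| <= #|Y| ^ 2.
Proof.
move=> R_sym R_tfree.
pose d y := #|[set z in Y | R y z]|.
set D := #|_|.
have D_sum : D = \sum_(y in Y) d y.
  rewrite (eq_bigr (fun y => \sum_(z | (z \in Y) && R y z) 1)); last first.
    by move=> y _; rewrite sum1dep_card.
  rewrite pair_big_dep /= sum1dep_card.
  by apply: eq_card => p; rewrite !inE.
have deg_edge y z : z \in Y -> R y z -> d y + d z <= #|Y|.
  move=> zY Ryz.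
  have disj : [disjoint [set w in Y | R y w] & [set w in Y | R z w]].
    apply/pred0P => w; rewrite !inE; apply/negP => /andP[/andP[_ Ryw] /andP[_ Rzw]].
    by apply: (R_tfree y z w); rewrite // R_sym.
  rewrite /d -cardsUI (disjoint_setI0 disj) cards0 addn0.
  by apply: subset_leq_card; apply/subsetP => w; rewrite !inE => /orP[]/andP[].
have sum_edges : \sum_(y in Y) \sum_(z | (z \in Y) && R y z) (d y + d z)
                 = 2 * \sum_(y in Y) d y ^ 2.
  rewrite (eq_bigr (fun y => d y ^ 2 + \sum_(z | (z \in Y) && R y z) d z)); last first.
    by move=> y _; rewrite big_split /= sum_nat_cond_const.
  rewrite big_split /= mul2n -addnn; congr (_ + _).
  rewrite (exchange_big_dep (fun z => z \in Y)) /=; last by move=> i j _ /andP[].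
  apply: eq_bigr => z zY; rewrite sum_nat_cond_const; congr (_ * _).
  by apply: eq_card => y; rewrite !inE zY R_sym.
have : 2 * \sum_(y in Y) d y ^ 2 <= #|Y| * D.
  rewrite -sum_edges D_sum big_distrr /=; apply: leq_sum => y yY.
  rewrite -[#|Y| * _]mulnC -sum_nat_cond_const.
  by apply: leq_sum => z /andP[zY Ryz]; apply: deg_edge.
have := sqr_sum_le Y d; rewrite -D_sum => D_sqr deg_sqr.
have : D * (2 * D) <= D * #|Y| ^ 2 by nia.
by case: (posnP D) => [->//|D_gt0]; rewrite leq_pmul2l.
Qed.

(* A decidable form of [contains_subgraph P4hat_edge], so that the theorem can
   be proved by contraposition without classical logic. *)
Definition has_P4hat (T : finType) (e : rel T) : bool :=
  [exists f : {ffun 'I_5 -> T},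
     injectiveb f && [forall u, forall v, P4hat_edge u v ==> e (f u) (f v)]].

Lemma has_P4hatP (T : finType) (e : rel T) :
  reflect (contains_subgraph P4hat_edge e) (has_P4hat e).
Proof.
apply: (iffP existsP) => [[f /andP[/injectiveP f_inj /'forall_'forall_implyP f_hom]]|].
  by exists f.
case=> f [f_inj f_hom]; exists (finfun f); apply/andP; split.
  by apply/injectiveP => u v; rewrite !ffunE => /f_inj.
by apply/'forall_'forall_implyP => u v; rewrite !ffunE; apply: f_hom.
Qed.

Section P4hatFree.
Variables (T : finType) (e : rel T).
Hypotheses (e_sym : symmetric e) (e_irr : irreflexive e).

Lemma P4hat_subgraph (w a b c d : T) : uniq [:: w; a; b; c; d] ->
    e w a -> e w b -> e w c -> e w d -> e a b -> e b c -> e c d ->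
  contains_subgraph P4hat_edge e.
Proof.
move=> U wa wb wc wd ab bc cd.
exists (fun i : 'I_5 => nth w [:: w; a; b; c; d] i); split.
  by move=> i j /eqP; rewrite nth_uniq // => /eqP/val_inj.
move=> [i Hi] [j Hj]; rewrite /P4hat_edge /=.
case: i Hi => [|[|[|[|[|i]]]]] Hi //; case: j Hj => [|[|[|[|[|j]]]]] Hj //= _.
all: by rewrite // e_sym.
Qed.

Hypothesis P4hat_free : ~ contains_subgraph P4hat_edge e.

Lemma no_P4hat (w a b c d : T) : uniq [:: w; a; b; c; d] ->
  e w a -> e w b -> e w c -> e w d -> e a b -> e b c -> e c d -> False.
Proof. by move=> *; apply: P4hat_free; apply: (@P4hat_subgraph w a b c d). Qed.

Lemma edge_neq x y : e x y -> x != y.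
Proof. by apply: contraTneq => ->; rewrite e_irr. Qed.

Definition clique (S : {set T}) :=
  [forall x in S, forall y in S, (x != y) ==> e x y].
Definition is_K4 (Q : {set T}) := (#|Q| == 4) && clique Q.
Definition codeg (x y : T) := #|[set w | e x w && e y w]|.

Local Notation tri := (triangles e).

Lemma cliqueP (S : {set T}) :
  reflect {in S &, forall x y, x != y -> e x y} (clique S).
Proof.
apply: (iffP forallP) => [cl x y xS yS xy|cl x].
  by move: (cl x); rewrite xS /= => /forall_inP/(_ y yS)/implyP; apply.
by apply/implyP=> xS; apply/forall_inP=> y yS; apply/implyP; apply: cl.
Qed.

Lemma triangleP (S : {set T}) :
  reflect (#|S| = 3 /\ {in S &, forall x y, x != y -> e x y}) (S \in tri).
Proof.
rewrite inE; apply: (iffP andP) => [[/eqP -> /cliqueP]|[-> /cliqueP]] //.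
Qed.

Lemma codeg_sym x y : codeg x y = codeg y x.
Proof. by apply: eq_card => w; rewrite !inE andbC. Qed.

Lemma codeg_gt0 x y z : e x z -> e y z -> 0 < codeg x y.
Proof. by move=> xz yz; apply/card_gt0P; exists z; rewrite inE xz yz. Qed.

Lemma codeg1_nbr_uniq x y w1 w2 : codeg x y = 1 ->
  e x w1 -> e y w1 -> e x w2 -> e y w2 -> w1 = w2.
Proof.
move=> c1 xw1 yw1 xw2 yw2; have /card_le1P : codeg x y <= 1 by rewrite c1.
by move=> /(_ w1); rewrite inE xw1 yw1 => /(_ isT w2); rewrite !inE xw2 yw2 => /esym/eqP.
Qed.

Lemma triangle_third_vertex (S : {set T}) y z : S \in tri -> y \in S -> z \in S -> y != z ->
  exists w, [/\ w \in S, w != y, w != z, e y w & e z w] /\ S = [set y; z; w].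
Proof.
case/triangleP=> S3 cl yS zS yz.
have [u [v [[uS vS uv uy vy] defS]]] := cards3_at S3 yS.
have : z \in [set y; u; v] by rewrite -defS.
rewrite !inE -orbA => /or3P[/eqP zy|/eqP zu|/eqP zv].
- by rewrite zy eqxx in yz.
- subst z; exists v; split=> //.
  by rewrite vS vy eq_sym uv !cl // eq_sym.
- subst z; exists u; split; first by rewrite uS uy uv !cl // 1?eq_sym.
  by rewrite defS -!setUA [[set v] :|: _]setUC.
Qed.

Lemma triangleE (S : {set T}) : S \in tri -> exists a b c,
  ([/\ a != b, a != c & b != c] /\ [/\ e a b, e a c & e b c]) /\ S = [set a; b; c].
Proof.
move=> St; have /card_gt0P[a aS] : 0 < #|S| by case/triangleP: St => ->.
case/triangleP: St => S3 cl.
have [u [v [[uS vS uv ua va] defS]]] := cards3_at S3 aS.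
exists a, u, v; split=> //.
by split; [rewrite !(eq_sym a) ua va uv | rewrite !cl // eq_sym].
Qed.

Lemma triangle_eq_set3 (S : {set T}) x1 x2 x3 : S \in tri ->
    x1 \in S -> x2 \in S -> x3 \in S -> x1 != x2 -> x1 != x3 -> x2 != x3 ->
  S = [set x1; x2; x3].
Proof.
move=> St s1 s2 s3 d12 d13 d23.
have [w [[wS w1 w2 _ _] defS]] := triangle_third_vertex St s1 s2 d12.
have : x3 \in [set x1; x2; w] by rewrite -defS.
by rewrite !inE -orbA => /or3P[/eqP E|/eqP E|/eqP ->] //; move: d13 d23; rewrite E eqxx.
Qed.

Lemma card_triangles_sub (B : {set T}) :
  #|[set S in tri | S \subset B]| <= 'C(#|B|, 3).
Proof.
rewrite -cards_draws; apply: subset_leq_card.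
by apply/subsetP => S /setIdP[/triangleP[S3 _] SB]; rewrite inE SB S3 eqxx.
Qed.

Lemma card_triangles_sub3 (B : {set T}) : #|B| <= 3 ->
  #|[set S in tri | S \subset B]| <= 1.
Proof.
move=> B3; apply: (leq_trans (card_triangles_sub B)).
by case: #|B| B3 => [|[|[|[|?]]]].
Qed.

Lemma card_triangles_on_edge (F : {set {set T}}) y z (C : {set T}) : y != z ->
    {in F, forall S, [/\ S \in tri, y \in S & z \in S]} ->
    (forall S w, S \in F -> w \in S -> w != y -> w != z -> w \in C) ->
  #|F| <= #|C|.
Proof.
move=> yz F_tri F_C.
apply: (leq_trans _ (leq_imset_card (fun w => [set y; z; w]) C)).
apply: subset_leq_card; apply/subsetP => S SF.
have [St yS zS] := F_tri S SF.
have [w [[wS wy wz _ _] defS]] := triangle_third_vertex St yS zS yz.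
by apply/imsetP; exists w => //; apply: F_C SF wS wy wz.
Qed.

Lemma K4_card (Q : {set T}) : is_K4 Q -> #|Q| = 4.
Proof. by case/andP=> /eqP. Qed.

Lemma K4_no_outer_common_nbr (Q : {set T}) a b w : is_K4 Q ->
  a \in Q -> b \in Q -> a != b -> w \notin Q -> e a w -> e b w -> False.
Proof.
case/andP=> /eqP Q4 /cliqueP cl aQ bQ ab wQ aw bw.
have [c [d [[cQ dQ cd] [ca cb da db]]]] := cards4_others Q4 aQ bQ ab.
have notw x : x \in Q -> w != x by move=> xQ; apply: contraNneq wQ => ->.
(* [a] is the apex over the path [w b c d] *)
have U : uniq [:: a; w; b; c; d].
  rewrite /= !inE !negb_or ab cd ![a == _]eq_sym ca da ![b == _]eq_sym cb db.
  by rewrite !notw.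
apply: (no_P4hat U aw (cl a b aQ bQ ab)) (cl c d cQ dQ cd).
all: by [rewrite e_sym | apply: cl; rewrite // eq_sym].
Qed.

Lemma K4_common_nbr_in (Q : {set T}) a b w : is_K4 Q ->
  a \in Q -> b \in Q -> a != b -> e a w -> e b w -> w \in Q.
Proof.
move=> K aQ bQ ab aw bw; apply: contraT => wQ.
by case: (K4_no_outer_common_nbr K aQ bQ ab wQ aw bw).
Qed.

Lemma K4_outer_nbr_uniq (Q : {set T}) a b w : is_K4 Q ->
  a \in Q -> b \in Q -> w \notin Q -> e a w -> e b w -> a = b.
Proof.
move=> K aQ bQ wQ aw bw; apply/eqP; apply: contraT => ab.
by case: (K4_no_outer_common_nbr K aQ bQ ab wQ aw bw).
Qed.

Lemma K4_outer_nbrs_le1 (Q : {set T}) y : is_K4 Q -> y \notin Q ->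
  #|[set z in Q | e y z]| <= 1.
Proof.
move=> K yQ; apply/card_le1_eqP => a b /setIdP[aQ ya] /setIdP[bQ yb].
by apply/esym/(K4_outer_nbr_uniq K aQ bQ yQ); rewrite e_sym.
Qed.

Lemma K4_codeg_ge2 (Q : {set T}) a b : is_K4 Q ->
  a \in Q -> b \in Q -> a != b -> 2 <= codeg a b.
Proof.
case/andP=> /eqP Q4 /cliqueP cl aQ bQ ab.
have [c [d [[cQ dQ cd] [ca cb da db]]]] := cards4_others Q4 aQ bQ ab.
by apply/card_gt1P; exists c, d; rewrite !inE cd !cl // 1?eq_sym.
Qed.

Lemma K4_meet_gt1 (Q Q' : {set T}) : is_K4 Q -> is_K4 Q' ->
  1 < #|Q :&: Q'| -> Q = Q'.
Proof.
move=> K K' /card_gt1P[a [b [/setIP[aQ aQ'] /setIP[bQ bQ'] ab]]].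
case/andP: (K') => /eqP Q'4 /cliqueP cl'.
apply/esym/eqP; rewrite eqEcard K4_card // Q'4 leqnn andbT.
apply/subsetP=> v vQ'.
case: (eqVneq v a) => [->//|va]; case: (eqVneq v b) => [->//|vb].
by apply: (K4_common_nbr_in K aQ bQ ab); apply: cl'; rewrite // eq_sym.
Qed.

Lemma triangle_meet_K4 (Q S : {set T}) : is_K4 Q -> S \in tri ->
  ~~ (S \subset Q) -> #|S :&: Q| <= 1.
Proof.
move=> K /triangleP[_ cl] SQ.
apply/card_le1_eqP => a b /setIP[aS aQ] /setIP[bS bQ].
apply/eqP; apply: contraNT SQ => ab; apply/subsetP => v vS.
case: (eqVneq v a) => [->//|va]; case: (eqVneq v b) => [->//|vb].
by apply: (K4_common_nbr_in K bQ aQ ab); apply: cl; rewrite // eq_sym.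
Qed.

Lemma K4_of_triangle (S : {set T}) w : S \in tri ->
  {in S, forall x, e x w} -> is_K4 (w |: S).
Proof.
case/triangleP=> S3 cl Sw.
have wS : w \notin S by apply/negP=> /Sw; rewrite e_irr.
apply/andP; split; first by rewrite cardsU1 wS S3.
apply/cliqueP=> x y; rewrite !inE => /predU1P[->|xS] /predU1P[->|yS]; rewrite ?eqxx //.
- by move=> _; rewrite e_sym Sw.
- by move=> _; rewrite Sw.
- by apply: cl.
Qed.

Lemma triangle_extends a b c : e a b -> e a c -> e b c ->
  1 < codeg a b -> 1 < codeg a c -> exists w, [&& e a w, e b w & e c w].
Proof.
move=> eab eac ebc.
have other_nbr x y z : 1 < codeg x y -> exists w, [/\ e x w, e y w & w != z].
  case/card_gt1P=> w1 [w2 [w1S w2S w12]].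
  case: (eqVneq w1 z) => [w1z|w1z]; last by exists w1; move: w1S; rewrite inE => /andP[].
  by exists w2; move: w2S; rewrite inE -w1z eq_sym => /andP[].
move=> /(other_nbr _ _ c)[w [aw bw wc]] /(other_nbr _ _ b)[u [au cu ub]].
case cw: (e c w); first by exists w; rewrite aw bw cw.
case bu: (e b u); first by exists u; rewrite au bu cu.
have uw : u != w by apply: contraFneq cw => <-.
(* otherwise [a] is the apex over the path [w b c u] *)
exfalso; apply: (@no_P4hat a w b c u) => //; last by rewrite e_sym.
rewrite /= !inE !negb_or (edge_neq eab) (edge_neq eac) (edge_neq ebc).
rewrite (edge_neq aw) (edge_neq au) (edge_neq cu) (eq_sym w b) (edge_neq bw) wc.
by rewrite (eq_sym w u) uw (eq_sym b u) ub.
Qed.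

Lemma triangle_private_edge x y z : e x y -> e x z -> e y z ->
    (forall w, ~~ [&& e x w, e y w & e z w]) ->
  (codeg x y == 1) || (codeg x z == 1).
Proof.
move=> xy xz yz noK4.
have private_le1 s t r : e s r -> e t r -> (codeg s t == 1) = (codeg s t <= 1).
  by move=> sr tr; rewrite eqn_leq (codeg_gt0 sr tr) andbT.
rewrite (private_le1 _ _ _ xz yz) (private_le1 _ _ _ xy (_ : e z y)) 1?e_sym //.
apply: contraT; rewrite negb_or -!ltnNge => /andP[xy2 xz2].
have [w xyzw] := triangle_extends xy xz yz xy2 xz2.
by move: (noK4 w); rewrite xyzw.
Qed.

Definition vrank (x : T) : nat := enum_rank x.

Lemma vrank_inj : injective vrank.
Proof. by move=> x y /val_inj/enum_rank_inj. Qed.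

Lemma least_vrank3 a b c : a != b -> a != c -> b != c ->
  [|| (vrank a < vrank b) && (vrank a < vrank c),
      (vrank b < vrank a) && (vrank b < vrank c)
    | (vrank c < vrank a) && (vrank c < vrank b)].
Proof.
have vrank_neq x y : x != y -> vrank x != vrank y.
  by move=> xy; apply: contra_neq xy => /vrank_inj.
by move=> /vrank_neq ab /vrank_neq ac /vrank_neq bc; lia.
Qed.

(* Every private edge (one of codegree 1) is kept, except that in a triangle
   of three private edges the edge opposite the vertex of least rank is
   discarded: this makes [kept] triangle-free, while every triangle outside
   a K4 still keeps two of its edges. *)
Definition discarded (y z : T) := [exists w, [&& e y w, e z w, codeg y w == 1,
  codeg z w == 1, vrank w < vrank y & vrank w < vrank z]].
Definition kept (y z : T) := [&& e y z, codeg y z == 1 & ~~ discarded y z].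

Lemma discarded_sym y z : discarded y z = discarded z y.
Proof.
by apply/existsP/existsP=> [][w /and5P[a b c d /andP[f g]]]; exists w; rewrite a b c d f g.
Qed.

Lemma kept_sym y z : kept y z = kept z y.
Proof. by rewrite /kept e_sym codeg_sym discarded_sym. Qed.

Lemma discardedE x y z : codeg x y = 1 -> e x z -> e y z ->
  discarded x y =
    [&& codeg x z == 1, codeg y z == 1, vrank z < vrank x & vrank z < vrank y].
Proof.
move=> c1 xz yz; apply/existsP/idP => [[w /and5P[xw yw c d /andP[f g]]]|].
  by have <- := codeg1_nbr_uniq c1 xw yw xz yz; rewrite c d f g.
by case/and4P=> a b c d; exists z; rewrite xz yz a b c d.
Qed.

Lemma kept_triangle_free a b c : kept a b -> kept b c -> kept a c -> False.
Proof.
have least x y z : kept x y -> kept y z -> kept x z ->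
    vrank x < vrank y -> vrank x < vrank z -> False.
  move=> /and3P[xy /eqP cxy _] /and3P[_ _ /negP yz_kept] /and3P[xz /eqP cxz _].
  move=> xy_lt xz_lt; apply: yz_kept; apply/existsP; exists x.
  by rewrite !(e_sym _ x) xy xz codeg_sym cxy codeg_sym cxz !eqxx xy_lt xz_lt.
move=> kab kbc kac.
have [kba kcb kca] : [/\ kept b a, kept c b & kept c a] by rewrite !(kept_sym c) kept_sym.
have neq x y : kept x y -> x != y by case/and3P=> /edge_neq.
case/or3P: (least_vrank3 (neq _ _ kab) (neq _ _ kac) (neq _ _ kbc)) => /andP[].
- exact: least kab kbc kac.
- exact: least kba kac kbc.
- exact: least kca kab kcb.
Qed.

Lemma kept_apex u v w : v != w -> e u v -> e u w -> e v w ->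
    codeg u v = 1 -> codeg u w = 1 ->
    (codeg v w != 1) || (vrank u < vrank v) && (vrank u < vrank w) ->
  kept u v && kept u w.
Proof.
move=> vw euv euw evw cuv cuw apex.
rewrite /kept euv euw cuv cuw eqxx (discardedE cuv euw evw).
rewrite (discardedE cuw euv (_ : e w v)) 1?e_sym // cuv cuw (codeg_sym w v) eqxx /=.
by case: (codeg v w == 1) apex => //= /andP[]; lia.
Qed.

Lemma triangle_kept_apex (S : {set T}) : S \in tri ->
    (forall w, ~~ [forall x in S, e x w]) ->
  exists u v w, [/\ S = [set u; v; w], v != w & kept u v && kept u w].
Proof.
case/triangleE=> a [b [c [[[ab ac bc] [eab eac ebc]] ->]]] noK4.
have noext w : ~~ [&& e a w, e b w & e c w].
  apply: contra (noK4 w) => /and3P[aw bw cw].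
  by apply/forall_inP => x; rewrite !inE -orbA => /or3P[]/eqP->.
have [eba eca ecb] : [/\ e b a, e c a & e c b] by rewrite !(e_sym c) e_sym.
have pa := triangle_private_edge eab eac ebc noext.
have pb : (codeg a b == 1) || (codeg b c == 1).
  rewrite codeg_sym; apply: triangle_private_edge eba ebc eac _ => w.
  by rewrite andbCA noext.
have pc : (codeg a c == 1) || (codeg b c == 1).
  rewrite !(codeg_sym _ c); apply: triangle_private_edge eca ecb eab _ => w.
  by rewrite andbC -andbA noext.
(* At most one edge is not private; the vertex opposite to it, or else the
   vertex of least rank, is an apex. *)
move: pa pb pc (least_vrank3 ab ac bc).
set p := codeg a b == 1; set q := codeg a c == 1; set r := codeg b c == 1 => pq pr qr least.
have : [|| [&& p, q & ~~ r || (vrank a < vrank b) && (vrank a < vrank c)],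
           [&& p, r & ~~ q || (vrank b < vrank a) && (vrank b < vrank c)]
         | [&& q, r & ~~ p || (vrank c < vrank a) && (vrank c < vrank b)]].
  by move: pq pr qr least; case: p; case: q; case: r.
have setE (x y z : T) : [set x; y; z] = [set y; x; z] /\ [set x; y; z] = [set z; x; y].
  by split; apply/setP => t; rewrite !inE; do !case: (_ == _).
case/or3P => /and3P[/eqP c1 /eqP c2 apex].
- by exists a, b, c; split=> //; apply: kept_apex.
- exists b, a, c; rewrite (setE a b c).1 ac; split=> //.
  by apply: kept_apex; rewrite // ?(codeg_sym b a) ?(codeg_sym c a) ?(codeg_sym a c).
- exists c, a, b; rewrite (setE a b c).2 ab; split=> //.
  by apply: kept_apex; rewrite // ?(codeg_sym c a) ?(codeg_sym c b).
Qed.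

Lemma card_kept_pairs_triangle (S : {set T}) : S \in tri ->
  (forall w, ~~ [forall x in S, e x w]) -> 4 <= #|pairs_in kept S|.
Proof.
move=> St noK4; have [u [v [w [-> vw /andP[kuv kuw]]]]] := triangle_kept_apex St noK4.
have [uv uw] : u != v /\ u != w by split; [case/and3P: kuv | case/and3P: kuw] => /edge_neq.
apply/card_geqP; exists [:: (u, v); (v, u); (u, w); (w, u)]; split=> //.
  rewrite /= !inE !xpair_eqE (eq_sym v u) (eq_sym w u).
  by rewrite (negbTE uv) (negbTE uw) (negbTE vw) eqxx.
move=> p; rewrite !inE => /or4P[]/eqP->; rewrite /= !eqxx ?orbT //=.
all: by rewrite kept_sym.
Qed.

Lemma kept_triangles_le1 y z : kept y z ->
  #|[set S in tri | (y \in S) && (z \in S)]| <= 1.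
Proof.
case/and3P=> eyz /eqP c1 _.
apply/card_le1_eqP => S1 S2 /setIdP[S1t /andP[yS1 zS1]] /setIdP[S2t /andP[yS2 zS2]].
have yz := edge_neq eyz.
have [w1 [[_ _ _ yw1 zw1] ->]] := triangle_third_vertex S1t yS1 zS1 yz.
have [w2 [[_ _ _ yw2 zw2] ->]] := triangle_third_vertex S2t yS2 zS2 yz.
by rewrite (codeg1_nbr_uniq c1 yw1 zw1 yw2 zw2).
Qed.

Lemma card_triangles_no_K4_le (F : {set {set T}}) : F \subset tri ->
    (forall S w, S \in F -> ~~ [forall x in S, e x w]) ->
  4 * #|F| <= #|pairs_in kept [set: T]|.
Proof.
move=> Ftri noK4.
apply: (@leq_trans (\sum_(S in F) #|[set p in pairs_in kept [set: T] |
                                      (p.1 \in S) && (p.2 \in S)]|)).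
  rewrite mulnC -sum_nat_const; apply: leq_sum => S SF.
  apply: (leq_trans (card_kept_pairs_triangle (subsetP Ftri S SF) (noK4 S ^~ SF))).
  by apply/eq_leq/eq_card => p; rewrite !inE andbA andbC.
apply: sum_card_incidence_le => -[y z]; rewrite !inE /= => kyz.
apply: leq_trans (kept_triangles_le1 kyz); apply: subset_leq_card.
apply/subsetP => S /setIdP[SF yzS]; apply/setIdP; split=> //.
exact: (subsetP Ftri).
Qed.

Lemma kept_mantel (Y : {set T}) : 2 * #|pairs_in kept Y| <= #|Y| ^ 2.
Proof. exact: mantel_pairs kept_sym kept_triangle_free. Qed.

Lemma no_K4_triangle_bound : (forall Q, ~~ is_K4 Q) -> 8 * #|tri| <= #|T| ^ 2.
Proof.
move=> noK4; rewrite -cardsT.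
have := kept_mantel [set: T].
have : 4 * #|tri| <= #|pairs_in kept [set: T]|.
  apply: card_triangles_no_K4_le => // S w St; apply/negP => /forall_inP Sw.
  by move: (noK4 (w |: S)); rewrite K4_of_triangle.
lia.
Qed.

Lemma kept_leaves_K4 (Q : {set T}) y z : is_K4 Q -> kept y z -> y \in Q -> z \notin Q.
Proof.
move=> K /and3P[eyz /eqP c1 _] yQ; apply/negP => zQ.
by have := K4_codeg_ge2 K yQ zQ (edge_neq eyz); rewrite c1.
Qed.

Lemma card_kept_pairs_from_K4 (Q : {set T}) : is_K4 Q ->
  #|[set p : T * T | kept p.1 p.2 && (p.1 \in Q)]| <= #|~: Q|.
Proof.
move=> K; rewrite -(@card_in_imset _ _ snd); last first.
  move=> [y1 z] [y2 z'] /setIdP[k1 q1] /setIdP[k2 q2] /= E; subst z'.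
  have zQ := kept_leaves_K4 K k1 q1.
  case/and3P: k1 => e1 _ _; case/and3P: k2 => e2 _ _.
  by have /= -> := K4_outer_nbr_uniq K q1 q2 zQ e1 e2.
apply: subset_leq_card; apply/subsetP => z /imsetP[[y z'] /setIdP[k q] ->] /=.
by rewrite inE (kept_leaves_K4 K k q).
Qed.

Lemma card_kept_pairs_K4 (Q : {set T}) : is_K4 Q ->
  #|pairs_in kept [set: T]| <= 2 * #|~: Q| + #|pairs_in kept (~: Q)|.
Proof.
move=> K; set from := [set p : T * T | kept p.1 p.2 && (p.1 \in Q)].
set to := [set p : T * T | kept p.1 p.2 && (p.2 \in Q)].
have to_from : #|to| <= #|from|.
  rewrite -(@card_imset _ _ (fun p : T * T => (p.2, p.1))); last first.
    by move=> [? ?] [? ?] [-> ->].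
  apply: subset_leq_card; apply/subsetP => _ /imsetP[[y z] + ->].
  by rewrite !inE /= kept_sym.
apply: (@leq_trans (#|from| + #|to| + #|pairs_in kept (~: Q)|)).
  apply: (leq_trans _ (leq_add (leq_card_setU _ _) (leqnn _))).
  apply: (leq_trans _ (leq_card_setU _ _)); apply: subset_leq_card.
  apply/subsetP => -[y z]; rewrite !inE /= => k; rewrite k /=.
  by case: (y \in Q); case: (z \in Q).
have from_le : #|from| <= #|~: Q| := card_kept_pairs_from_K4 K.
lia.
Qed.

Lemma unique_K4_triangle_bound (Q : {set T}) : is_K4 Q ->
    (forall Q', is_K4 Q' -> Q' = Q) ->
  8 * #|tri| <= 32 + 4 * #|~: Q| + #|~: Q| ^ 2.
Proof.
move=> K K_uniq; set F := [set S in tri | ~~ (S \subset Q)].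
have tri_split : #|tri| <= #|[set S in tri | S \subset Q]| + #|F|.
  rewrite -(cardsID [set S : {set T} | S \subset Q] tri).
  by apply: leq_add; apply: subset_leq_card; apply/subsetP => S;
    rewrite !inE => /andP[-> ->].
have inQ : #|[set S in tri | S \subset Q]| <= 4.
  by have := card_triangles_sub Q; rewrite K4_card.
have outQ : 4 * #|F| <= #|pairs_in kept [set: T]|.
  apply: card_triangles_no_K4_le; first by apply/subsetP => S /setIdP[].
  move=> S w /setIdP[St SQ]; apply/negP => /forall_inP Sw.
  by move: SQ; rewrite -(K_uniq _ (K4_of_triangle St Sw)) subsetUr.
have := card_kept_pairs_K4 K; have := kept_mantel (~: Q); lia.
Qed.

Lemma triangles_at_link_pairs y :
  2 * #|[set S in tri | y \in S]| <= #|pairs_in e [set z | e y z]|.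
Proof.
set F := [set S in tri | y \in S].
apply: (@leq_trans (\sum_(S in F) #|[set p in pairs_in e [set z | e y z] |
                                      (p.1 \in S) && (p.2 \in S)]|)).
  rewrite mulnC -sum_nat_const; apply: leq_sum => S /setIdP[St yS].
  case/triangleP: (St) => S3 cl.
  have [u [v [[uS vS uv uy vy] _]]] := cards3_at S3 yS.
  apply/card_geqP; exists [:: (u, v); (v, u)]; split=> //.
    by rewrite /= !inE !xpair_eqE (negbTE uv).
  move=> p; rewrite !inE => /orP[]/eqP-> /=; rewrite uS vS !cl // 1?eq_sym //.
apply: sum_card_incidence_le => -[u v]; rewrite !inE /= => /and3P[yu yv uv].
apply/card_le1_eqP => S1 S2 /setIdP[/setIdP[S1t yS1] /andP[uS1 vS1]]
                            /setIdP[/setIdP[S2t yS2] /andP[uS2 vS2]].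
have [yu' yv' uv'] := And3 (edge_neq yu) (edge_neq yv) (edge_neq uv).
by rewrite (triangle_eq_set3 S1t yS1 uS1 vS1) // (triangle_eq_set3 S2t yS2 uS2 vS2).
Qed.

Lemma link_P4_free u v w x y : e y u -> e y v -> e y w -> e y x ->
  uniq [:: u; v; w; x] -> ~~ [&& e u v, e v w & e w x].
Proof.
move=> yu yv yw yx U; apply/and3P => -[uv vw wx].
apply: (no_P4hat _ yu yv yw yx uv vw wx).
rewrite cons_uniq U andbT !inE !negb_or.
by rewrite !(edge_neq yu, edge_neq yv, edge_neq yw, edge_neq yx).
Qed.

Lemma link4_pairs_le6 y a b c d : uniq [:: a; b; c; d] ->
    e y a -> e y b -> e y c -> e y d ->
  \sum_(u <- [:: a; b; c; d]) \sum_(v <- [:: a; b; c; d]) (e u v : nat) <= 6.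
Proof.
rewrite /= !inE !negb_or => /and4P[/and3P[ab ac ad] /andP[bc bd] cd _] ya yb yc yd.
have [ba ca da] : [/\ b != a, c != a & d != a] by split; rewrite eq_sym.
have [cb db dc] : [/\ c != b, d != b & d != c] by split; rewrite eq_sym.
have neq := (ab, ac, ad, bc, bd, cd, ba, ca, da, cb, db, dc).
(* the twelve paths through [a b c d], up to reversal *)
have := link_P4_free ya yb yc yd ltac:(by rewrite /= !inE !negb_or !neq).
have := link_P4_free ya yb yd yc ltac:(by rewrite /= !inE !negb_or !neq).
have := link_P4_free ya yc yb yd ltac:(by rewrite /= !inE !negb_or !neq).
have := link_P4_free ya yc yd yb ltac:(by rewrite /= !inE !negb_or !neq).
have := link_P4_free ya yd yb yc ltac:(by rewrite /= !inE !negb_or !neq).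
have := link_P4_free ya yd yc yb ltac:(by rewrite /= !inE !negb_or !neq).
have := link_P4_free yb ya yc yd ltac:(by rewrite /= !inE !negb_or !neq).
have := link_P4_free yb ya yd yc ltac:(by rewrite /= !inE !negb_or !neq).
have := link_P4_free yb yc ya yd ltac:(by rewrite /= !inE !negb_or !neq).
have := link_P4_free yb yd ya yc ltac:(by rewrite /= !inE !negb_or !neq).
have := link_P4_free yc ya yb yd ltac:(by rewrite /= !inE !negb_or !neq).
have := link_P4_free yc yb ya yd ltac:(by rewrite /= !inE !negb_or !neq).
rewrite !big_cons !big_nil /= !addn0 !e_irr.
rewrite (e_sym b a) (e_sym c a) (e_sym d a) (e_sym c b) (e_sym d b) (e_sym d c).
by case: (e a b); case: (e a c); case: (e a d); case: (e b c); case: (e b d); case: (e c d).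
Qed.

Lemma link_pairs_le6 y : #|[set z | e y z]| <= 4 -> #|pairs_in e [set z | e y z]| <= 6.
Proof.
set N := [set z | e y z] => N4.
have -> : #|pairs_in e N| = \sum_(u <- enum N) \sum_(v <- enum N) (e u v : nat).
  rewrite big_enum /= (eq_bigr (fun u => \sum_(v | (v \in N) && e u v) 1)); last first.
    move=> u _; rewrite big_enum big_mkcondr /=; apply: eq_bigr => v _.
    by case: (e u v).
  by rewrite pair_big_dep /= sum1dep_card; apply: eq_card => p; rewrite !inE.
have N_adj z : z \in enum N -> e y z by rewrite mem_enum inE.
have : size (enum N) <= 4 by rewrite -cardE.
move: (enum_uniq (mem N)) N_adj.
case: (enum N) => [|a [|b [|c [|d [|? ?]]]]] //= U N_adj _; last first.
  by apply: (link4_pairs_le6 U); apply: N_adj; rewrite !inE eqxx ?orbT.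
all: rewrite ?big_cons ?big_nil /= ?addn0 ?e_irr //.
- rewrite (e_sym b a) (e_sym c a) (e_sym c b).
  by case: (e a b); case: (e a c); case: (e b c).
- by rewrite (e_sym b a); case: (e a b).
Qed.

Lemma deg4_triangles_le3 y : #|[set z | e y z]| <= 4 ->
  #|[set S in tri | y \in S]| <= 3.
Proof.
move=> /link_pairs_le6 le6; have := triangles_at_link_pairs y; lia.
Qed.

Section TwoK4.
Variables Q1 Q2 : {set T}.
Hypotheses (K1 : is_K4 Q1) (K2 : is_K4 Q2).

Let X := Q1 :|: Q2.
Let O := [set S in tri | ~~ (S \subset Q1) && ~~ (S \subset Q2)].

Lemma triangles_two_K4 : #|tri| <= 8 + #|O|.
Proof.
have in_Q (Q : {set T}) : is_K4 Q -> #|[set S in tri | S \subset Q]| <= 4.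
  by move=> K; have := card_triangles_sub Q; rewrite K4_card.
have := in_Q _ K1; have := in_Q _ K2.
set O1 := [set S in tri | S \subset Q1]; set O2 := [set S in tri | S \subset Q2].
move=> O2_le O1_le; apply: (@leq_trans (#|O1| + #|O2| + #|O|)); last by lia.
apply: (leq_trans _ (leq_add (leq_card_setU _ _) (leqnn _))).
apply: (leq_trans _ (leq_card_setU _ _)); apply: subset_leq_card.
apply/subsetP => S St; apply/setUP.
case S1: (S \subset Q1); first by left; apply/setUP; left; apply/setIdP.
case S2: (S \subset Q2); first by left; apply/setUP; right; apply/setIdP.
by right; apply/setIdP; rewrite S1 S2.
Qed.

Lemma O_triangle (S : {set T}) : S \in O -> S \in tri.
Proof. by case/setIdP. Qed.

Lemma card_X : #|X| + #|Q1 :&: Q2| = 8.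
Proof. by rewrite cardsUI !K4_card. Qed.

Lemma outer_nbrs_in_X y : y \notin X -> #|[set w in X | e y w]| <= 2.
Proof.
rewrite !inE negb_or => /andP[y1 y2].
apply: (@leq_trans (#|[set w in Q1 | e y w]| + #|[set w in Q2 | e y w]|)).
  apply: (leq_trans _ (leq_card_setU _ _)); apply: subset_leq_card.
  by apply/subsetP => w; rewrite !inE => /andP[/orP[]-> ->]; rewrite ?orbT.
exact: (leq_add (K4_outer_nbrs_le1 K1 y1) (K4_outer_nbrs_le1 K2 y2)).
Qed.

Lemma O_meet_X (S : {set T}) : S \in O -> #|S :&: X| <= 2.
Proof.
case/setIdP=> St /andP[n1 n2].
apply: (@leq_trans (#|S :&: Q1| + #|S :&: Q2|)); last first.
  exact: (leq_add (triangle_meet_K4 K1 St n1) (triangle_meet_K4 K2 St n2)).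
by rewrite /X setIUr; apply: leq_card_setU.
Qed.

Lemma card_O_split (S : {set T}) : S \in O -> #|S :&: X| + #|S :\: X| = 3.
Proof. by move/O_triangle/triangleP=> [<- _]; rewrite cardsID. Qed.

Lemma triangle_sub_nbrs (S : {set T}) y : S \in tri -> y \in S ->
  S :\: X \subset [set y] -> S \subset y |: [set w in X | e y w].
Proof.
case/triangleP=> _ cl yS SX; apply/subsetP => v vS; rewrite in_setU1.
case: (eqVneq v y) => //= vy.
have vX : v \in X.
  apply: contraT => vX; have : v \in S :\: X by rewrite inE vX vS.
  by move/(subsetP SX); rewrite inE (negbTE vy).
by apply/setIdP; rewrite vX cl // eq_sym.
Qed.

Lemma O_meets_outside (S : {set T}) : S \in O -> 0 < #|S :\: X|.
Proof. by move=> SO; have := O_meet_X SO; have := card_O_split SO; lia. Qed.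

Lemma card_O_one_outer y : y \notin X -> #|[set S in O | S :\: X \subset [set y]]| <= 1.
Proof.
move=> yX; have : #|y |: [set w in X | e y w]| <= 3.
  by rewrite cardsU1; have := outer_nbrs_in_X yX; case: (y \notin _); lia.
move/card_triangles_sub3; apply: leq_trans; apply: subset_leq_card.
apply/subsetP => S /setIdP[SO SX]; have St := O_triangle SO.
have /card_gt0P[v vSX] := O_meets_outside SO.
have yS : y \in S by move: vSX (subsetP SX v vSX); rewrite !inE => /andP[_ vS] /eqP <-.
by apply/setIdP; split; last exact: triangle_sub_nbrs.
Qed.

Section SharedVertex.
Variable p : T.
Hypotheses (Q12 : #|Q1 :&: Q2| <= 1) (p1 : p \in Q1) (p2 : p \in Q2).

Lemma no_cross_edge a b : a \in Q1 -> a \notin Q2 -> b \in Q2 -> b \notin Q1 -> ~~ e a b.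
Proof.
move=> a1 a2 b2 b1; apply/negP => eab.
have epb : e p b.
  by case/andP: K2 => _ /cliqueP; apply; rewrite // eq_sym; apply: contraNneq b1 => ->.
by move: a2; rewrite (K4_outer_nbr_uniq K1 a1 p1 b1 eab epb) p2.
Qed.

Lemma O_meet_X_shared (S : {set T}) : S \in O -> #|S :&: X| <= 1.
Proof.
move=> SO; case/setIdP: SO => St /andP[n1 n2].
have o1 := triangle_meet_K4 K1 St n1; have o2 := triangle_meet_K4 K2 St n2.
case/triangleP: St => _ cl.
apply/card_le1_eqP => a b /setIP[aS aX] /setIP[bS bX].
case: (eqVneq a b) => [->//|ab]; exfalso.
have eab : e a b by apply: cl.
have two (Q : {set T}) : a \in Q -> b \in Q -> 1 < #|S :&: Q|.
  by move=> aQ bQ; apply/card_gt1P; exists a, b; rewrite !inE aS bS aQ bQ.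
move: aX bX; rewrite !inE.
case a1: (a \in Q1); case a2: (a \in Q2).
all: case b1: (b \in Q1); case b2: (b \in Q2) => //= _ _.
all: try by have := two Q1 a1 b1; rewrite ltnNge o1.
all: try by have := two Q2 a2 b2; rewrite ltnNge o2.
- by move/negP: (no_cross_edge a1 (negbT a2) b2 (negbT b1)).
- by move/negP: (no_cross_edge b1 (negbT b2) a2 (negbT a1)); rewrite e_sym.
Qed.

Lemma card_X_shared : #|X| = 7.
Proof.
have : #|Q1 :&: Q2| = 1.
  by apply/eqP; rewrite eqn_leq Q12; apply/card_gt0P; exists p; rewrite inE p1 p2.
by have := card_X; lia.
Qed.

Lemma O_shared_n9 : #|T| = 9 -> #|O| <= 2.
Proof.
move=> T9; have cY : #|~: X| = 2 by have := cardsC X; rewrite card_X_shared T9; lia.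
have Y_sub S : S \in O -> ~: X \subset S.
  move=> SO; have := O_meet_X_shared SO; have := card_O_split SO => split3 le1.
  have SXY : S :\: X \subset ~: X by rewrite setDE subsetIr.
  have -> : ~: X = S :\: X by apply/esym/eqP; rewrite eqEcard SXY cY; lia.
  exact: subsetDl.
case/eqP/cards2P: cY => y1 [y2 [y12 defY]].
have [y1X y2X] : y1 \in ~: X /\ y2 \in ~: X by rewrite defY !inE !eqxx orbT.
apply: (leq_trans _ (outer_nbrs_in_X (_ : y1 \notin X))); last by rewrite -in_setC.
apply: (card_triangles_on_edge y12).
  by move=> S SO; rewrite (O_triangle SO) !(subsetP (Y_sub S SO)).
move=> S w SO wS w1 w2; apply/setIdP; split.
  by apply: contraT; rewrite -in_setC defY !inE (negbTE w1) (negbTE w2).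
case/triangleP: (O_triangle SO) => _ cl.
by apply: cl => //; [exact: (subsetP (Y_sub S SO)) | rewrite eq_sym].
Qed.

Lemma O_shared_n10 : #|T| = 10 -> #|O| <= 4.
Proof.
move=> T10; have cY : #|~: X| = 3 by have := cardsC X; rewrite card_X_shared T10; lia.
have twice : 2 * #|O| <= \sum_(S in O) #|S :&: ~: X|.
  rewrite mulnC -sum_nat_const; apply: leq_sum => S SO.
  by have := O_meet_X_shared SO; have := card_O_split SO; rewrite setDE; lia.
have per_vertex : \sum_(y in ~: X) #|[set S in O | y \in S]| <= 3 * 3.
  rewrite -{1}cY -sum_nat_const; apply: leq_sum => y yY.
  apply: (@leq_trans #|[set S in tri | y \in S]|).
    apply: subset_leq_card; apply/subsetP => S /setIdP[SO yS].
    by apply/setIdP; rewrite O_triangle.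
  apply: deg4_triangles_le3.
  apply: (@leq_trans #|[set w in X | e y w] :|: (~: X :\ y)|).
    apply: subset_leq_card; apply/subsetP => w; rewrite inE => yw; apply/setUP.
    case wX: (w \in X); [left | right]; first by apply/setIdP.
    by rewrite in_setD1 in_setC wX andbT (eq_sym w y) (edge_neq yw).
  apply: (leq_trans (leq_card_setU _ _)).
  have := outer_nbrs_in_X (_ : y \notin X); rewrite -in_setC => /(_ yY).
  by rewrite (cardsD1 y) yY in cY; lia.
by rewrite sum_card_setI in twice; lia.
Qed.

End SharedVertex.

Lemma card_X_disjoint : #|Q1 :&: Q2| = 0 -> #|X| = 8.
Proof. by have := card_X; lia. Qed.

Lemma O_disjoint_n9 : #|Q1 :&: Q2| = 0 -> #|T| = 9 -> #|O| <= 1.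
Proof.
move=> /card_X_disjoint cX T9.
have /cards1P[y defY] : #|~: X| == 1 by have := cardsC X; rewrite cX T9; lia.
apply: (leq_trans _ (card_O_one_outer (_ : y \notin X))); last by rewrite -in_setC defY inE.
apply: subset_leq_card; apply/subsetP => S SO; apply/setIdP; split=> //.
by rewrite setDE defY subsetIr.
Qed.

Lemma O_disjoint_n10 : #|Q1 :&: Q2| = 0 -> #|T| = 10 -> #|O| <= 4.
Proof.
move=> /card_X_disjoint cX T10.
have /cards2P[y [z [yz defY]]] : #|~: X| == 2 by have := cardsC X; rewrite cX T10; lia.
have [yX zX] : y \notin X /\ z \notin X by rewrite -!in_setC defY !inE !eqxx orbT.
set O2 := [set S in O | (y \in S) && (z \in S)].
set Oy := [set S in O | S :\: X \subset [set y]].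
set Oz := [set S in O | S :\: X \subset [set z]].
have O2_le : #|O2| <= 2.
  apply: (leq_trans _ (outer_nbrs_in_X yX)); apply: (card_triangles_on_edge yz).
    by move=> S /setIdP[SO /andP[yS zS]]; rewrite O_triangle.
  move=> S w /setIdP[SO /andP[yS zS]] wS wy wz; apply/setIdP; split.
    by apply: contraT; rewrite -in_setC defY !inE (negbTE wy) (negbTE wz).
  by case/triangleP: (O_triangle SO) => _ cl; apply: cl; rewrite // eq_sym.
apply: (@leq_trans (#|O2| + #|Oy| + #|Oz|)); last first.
  have Oy_le : #|Oy| <= 1 := card_O_one_outer yX.
  have Oz_le : #|Oz| <= 1 := card_O_one_outer zX.
  lia.
apply: (leq_trans _ (leq_add (leq_card_setU _ _) (leqnn _))).
apply: (leq_trans _ (leq_card_setU _ _)); apply: subset_leq_card.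
apply/subsetP => S SO; rewrite !in_setU.
have SX : S :\: X \subset [set y; z] by rewrite setDE defY subsetIr.
case yS: (y \in S); case zS: (z \in S).
- by rewrite (_ : S \in O2) // inE SO yS zS.
- rewrite (_ : S \in Oy) ?orbT // inE SO; apply/subsetP => v vS; move: (subsetP SX v vS).
  by rewrite !inE => /orP[] // /eqP vz; move: vS; rewrite vz in_setD zS andbF.
- rewrite (_ : S \in Oz) ?orbT // inE SO; apply/subsetP => v vS; move: (subsetP SX v vS).
  by rewrite !inE => /orP[/eqP vy|//]; move: vS; rewrite vy in_setD yS andbF.
- case/card_gt0P: (O_meets_outside SO) => v vSX.
  have := subsetP SX v vSX; rewrite !inE => /orP[]/eqP vE.
  + by move: vSX; rewrite vE in_setD yS andbF.
  + by move: vSX; rewrite vE in_setD zS andbF.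
Qed.

End TwoK4.

Lemma two_K4_triangle_bound (Q1 Q2 : {set T}) : is_K4 Q1 -> is_K4 Q2 -> Q1 != Q2 ->
  (#|T| = 9 -> #|tri| <= 10) /\ (#|T| = 10 -> #|tri| <= 12).
Proof.
move=> K1 K2 Q12; have := triangles_two_K4 K1 K2.
case: (posnP #|Q1 :&: Q2|) => [I0|/card_gt0P[p /setIP[p1 p2]]] base.
  have O9 := O_disjoint_n9 K1 K2 I0; have O10 := O_disjoint_n10 K1 K2 I0.
  by split=> nT; [have := O9 nT | have := O10 nT]; lia.
have meet_le1 : #|Q1 :&: Q2| <= 1.
  by rewrite leqNgt; apply: contra Q12 => /(K4_meet_gt1 K1 K2)->.
have O9 := O_shared_n9 K1 K2 meet_le1 p1 p2.
have O10 := O_shared_n10 K1 K2 meet_le1 p1 p2.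
by split=> nT; [have := O9 nT | have := O10 nT]; lia.
Qed.

Lemma K4_cases :
  [\/ forall Q, ~~ is_K4 Q,
      exists2 Q, is_K4 Q & forall Q', is_K4 Q' -> Q' = Q
    | exists Q1 Q2, [/\ is_K4 Q1, is_K4 Q2 & Q1 != Q2]].
Proof.
case: (boolP [exists Q, is_K4 Q]) => [/existsP[Q KQ]|]; last first.
  by rewrite negb_exists => /forallP; constructor 1.
case: (boolP [exists Q', is_K4 Q' && (Q' != Q)]) => [/existsP[Q' /andP[KQ' nQ]]|].
  by constructor 3; exists Q', Q.
rewrite negb_exists => /forallP K_uniq; constructor 2; exists Q => // Q' KQ'.
by move: (K_uniq Q'); rewrite KQ' negbK => /eqP.
Qed.

Lemma triangles_n9_n10 : (#|T| = 9 -> #|tri| <= 10) /\ (#|T| = 10 -> #|tri| <= 12).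
Proof.
case: K4_cases => [noK4 | [Q KQ K_uniq] | [Q1 [Q2 [K1 K2 Q12]]]].
- by split=> nT; have := no_K4_triangle_bound noK4; rewrite nT; lia.
- have := unique_K4_triangle_bound KQ K_uniq; have := cardsC Q; rewrite K4_card //.
  by move=> cQ; split=> nT; rewrite nT in cQ; lia.
- exact: two_K4_triangle_bound K1 K2 Q12.
Qed.

Lemma K4_vertex_few_outer_nbrs (Q : {set T}) : is_K4 Q -> #|~: Q| < 8 ->
  exists2 x, x \in Q & #|[set z in ~: Q | e x z]| <= 1.
Proof.
move=> KQ cQ; pose out x := [set z in ~: Q | e x z].
have sum_out : \sum_(x in Q) #|out x| <= #|~: Q|.
  rewrite (eq_bigr (fun x => \sum_(z in ~: Q) (e x z : nat))); last first.
    by move=> x _; rewrite sum_nat_pred_card.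
  rewrite exchange_big /= -sum1_card; apply: leq_sum => z zQ; rewrite sum_nat_pred_card.
  apply: (leq_trans _ (K4_outer_nbrs_le1 KQ (_ : z \notin Q))); last by rewrite -in_setC.
  by apply: subset_leq_card; apply/subsetP => w; rewrite !inE e_sym.
apply/exists_inP; apply: contraT; rewrite negb_exists_in => /forall_inP out_ge2.
have : \sum_(x in Q) 2 <= \sum_(x in Q) #|out x|.
  by apply: leq_sum => x /out_ge2; rewrite -ltnNge.
by rewrite sum_nat_const K4_card //; lia.
Qed.

Lemma triangle_at_K4_vertex (Q S : {set T}) x : is_K4 Q -> x \in Q ->
  #|[set z in ~: Q | e x z]| <= 1 -> S \in tri -> x \in S -> S \subset Q.
Proof.
move=> KQ xQ out_le1 St xS; apply/subsetP => v vS; apply: contraT => vQ.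
have xv : x != v by apply: contraNneq vQ => <-.
have [u [[uS ux uv xu vu] _]] := triangle_third_vertex St xS vS xv.
have xv_e : e x v by case/triangleP: St => _; apply.
case uQ: (u \in Q).
  have [xu_neq uv_e] : x != u /\ e u v by rewrite eq_sym e_sym.
  by case: (K4_no_outer_common_nbr KQ xQ uQ xu_neq vQ xv_e uv_e).
have : 1 < #|[set z in ~: Q | e x z]|.
  by apply/card_gt1P; exists u, v; rewrite !inE uQ vQ xu xv_e uv.
by rewrite ltnNge out_le1.
Qed.

Lemma K4_vertex_in_few_triangles (Q : {set T}) : is_K4 Q -> #|~: Q| < 8 ->
  exists2 x, x \in Q & #|[set S in tri | x \in S]| <= 3.
Proof.
move=> KQ cQ; have [x xQ out_le1] := K4_vertex_few_outer_nbrs KQ cQ.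
exists x => //; set A := [set S in tri | S \subset Q].
have Qx_A : Q :\ x \in A.
  apply/setIdP; split; last exact: subsetDl.
  apply/triangleP; split; first by move: (K4_card KQ); rewrite (cardsD1 x) xQ add1n => -[].
  move=> a b /setD1P[_ aQ] /setD1P[_ bQ] ab.
  by case/andP: KQ => _ /cliqueP; apply.
have : [set S in tri | x \in S] \subset A :\ (Q :\ x).
  apply/subsetP => S /setIdP[St xS]; rewrite in_setD1 inE St.
  rewrite (triangle_at_K4_vertex KQ xQ out_le1 St xS) /= andbT.
  by apply: contraTneq xS => ->; rewrite !inE eqxx.
move/subset_leq_card/leq_trans; apply.
by have := card_triangles_sub Q; rewrite K4_card // (cardsD1 (Q :\ x) A) Qx_A.
Qed.

End P4hatFree.

Section VertexDeletion.
Variables (T : finType) (e : rel T) (x : T).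
Local Notation T' := {y : T | y != x}.

Definition delete_rel : rel T' := fun u v => e (val u) (val v).

Lemma delete_simple : simple_graph e -> simple_graph delete_rel.
Proof. by case=> e_irr e_sym; split=> [u|u v]; [exact: e_irr | exact: e_sym]. Qed.

Lemma delete_P4hat_free : ~ contains_subgraph P4hat_edge e ->
  ~ contains_subgraph P4hat_edge delete_rel.
Proof.
move=> free [f [f_inj f_hom]]; apply: free; exists (fun i => val (f i)); split=> //.
by move=> i j /val_inj /f_inj.
Qed.

Lemma card_delete : #|{: T'}| = #|T|.-1.
Proof. by rewrite card_sig cardC1. Qed.

Lemma card_triangles_delete :
  #|triangles e| = #|triangles delete_rel| + #|[set S in triangles e | x \in S]|.
Proof.
rewrite -(cardsID [set S : {set T} | x \in S] (triangles e)) addnC.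
congr (_ + _); last by apply: eq_card => S; rewrite !inE andbC.
have -> : triangles e :\: [set S : {set T} | x \in S] =
          (fun S' : {set T'} => val @: S') @: triangles delete_rel.
  apply/setP => S; rewrite inE; apply/andP/imsetP.
  - rewrite inE => -[xS /triangleP[S3 cl]].
    have valK : val @: [set u : T' | val u \in S] = S.
      apply/setP => v; apply/imsetP/idP => [[u]|vS]; first by rewrite inE => uS ->.
      have vx : v != x by apply: contraNneq xS => <-.
      by exists (exist _ v vx); rewrite ?inE.
    exists [set u | val u \in S] => //.
    apply/triangleP; split; first by rewrite -(card_imset _ val_inj) valK.
    by move=> u v; rewrite !inE => uS vS uv; apply: cl.
  - case=> S' /triangleP[S3 cl] ->; split.
      by rewrite inE; apply/imsetP => -[u _ ux]; move: (valP u); rewrite -ux eqxx.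
    apply/triangleP; split; first by rewrite (card_imset _ val_inj).
    move=> a b /imsetP[u uS ->] /imsetP[v vS ->] uv.
    by apply: cl => //; apply: contraNneq uv => ->.
by rewrite card_imset //; apply: imset_inj val_inj.
Qed.

End VertexDeletion.

Lemma triangles_n11 (T : finType) (e : rel T) : symmetric e -> irreflexive e ->
  ~ contains_subgraph P4hat_edge e -> #|T| = 11 -> #|triangles e| <= 15.
Proof.
move=> e_sym e_irr free T11.
case: (boolP [exists Q, is_K4 e Q]) => [/existsP[Q KQ]|]; last first.
  rewrite negb_exists => /forallP noK4.
  by have := no_K4_triangle_bound e_sym e_irr free noK4; rewrite T11; lia.
have cQ : #|~: Q| < 8 by have := cardsC Q; rewrite (K4_card KQ) T11; lia.
have [x _ few] := K4_vertex_in_few_triangles e_sym free KQ cQ.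
have [e'_irr e'_sym] := delete_simple x (conj e_irr e_sym).
have [_ b10] := triangles_n9_n10 e'_sym e'_irr (@delete_P4hat_free _ _ x free).
have := b10 (_ : #|{: {y : T | y != x}}| = 10); rewrite (@card_delete _ x) T11.
by rewrite (@card_triangles_delete _ e x) => /(_ erefl); lia.
Qed.

Theorem theorem2 :
  forall n t : nat, (n, t) \in [:: (9, 11); (10, 13); (11, 16)] ->
  forall e : rel 'I_n, simple_graph e ->
  t <= num_triangles e ->
  contains_subgraph P4hat_edge e.
Proof.
move=> n t nt e [e_irr e_sym] t_le; apply/has_P4hatP; apply: contraT => /has_P4hatP free.
have [b9 b10] := triangles_n9_n10 e_sym e_irr free.
have b11 := triangles_n11 e_sym e_irr free.
rewrite card_ord in b9 b10 b11.
move: nt t_le; rewrite /num_triangles !inE !xpair_eqE.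
by case/or3P => /andP[/eqP nE /eqP ->]; subst n => t_le;
  [have := b9 erefl | have := b10 erefl | have := b11 erefl]; lia.
Qed.
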